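(* Let $p$ be a permutation of a finite set of integers, and let the largest letter of $p$ be $m=\max(p)$. Write $p=\alpha m\beta$ and $\alpha=a_1a_2\dotsm a_i$. Define the set $\mathrm{unS}(p)$ recursively by \[ \mathrm{unS}(p) \,=\, \bigcup_{j=0}^i \left\{\, \gamma m\delta \,\colon \gamma\in\mathrm{unS}(a_1a_2\dotsm a_j),\, \delta\in\mathrm{unS}(a_{j+1}\dotsm a_i\beta) \,\right\} \] (with $\mathrm{unS}$ of the empty word being the set containing only the empty word). Then $\mathrm{unS}(p)$ contains all classical patterns (up to standardization) that can become $p$ after one pass of stack-sort.
   Context: A pass of stack-sort $S$: the entries of a permutation are read left to right and pushed onto a stack, where the elements on the stack must always be increasing from top to bottom; before pushing an entry, any smaller-than-needed entries, i.e. every entry on top of the stack smaller than the incoming entry, are popped to the output; at the end the stack is emptied to the output. $\mathrm{unS}(p)$ is the list of candidate patterns, i.e. orderings of the letters of $p$ possible prior to sorting. A classical pattern is a permutation; a permutation contains it if some subsequence standardizes to it. *)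

From mathcomp Require Import all_boot all_order all_algebra.
Set Implicit Arguments. Unset Strict Implicit. Unset Printing Implicit Defensive.
Import Order.TTheory GRing.Theory Num.Theory.
Local Open Scope ring_scope.

(* Stack: a list whose head is the top; entries increase from top to bottom. *)
Fixpoint spush (x : int) (stk : seq int) : seq int * seq int :=
  match stk with
  | [::] => ([::], [:: x])
  | y :: s => if y < x then let: (o, s') := spush x s in (y :: o, s')
              else ([::], x :: stk)
  end.

Fixpoint stack_sort_aux (w stk : seq int) : seq int :=
  match w with
  | [::] => stk
  | x :: w' => let: (o, s') := spush x stk in o ++ stack_sort_aux w' s'
  end.

Definition stack_sort (w : seq int) : seq int := stack_sort_aux w [::].

Definition maxw (p : seq int) : int := foldr Num.max (head 0 p) p.

(* unS, by recursion on the length (fuel n >= size p). *)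
Fixpoint unS_rec (n : nat) (p : seq int) : seq (seq int) :=
  match n with
  | 0%N => [:: [::]]
  | n'.+1 =>
    if p is [::] then [:: [::]] else
    let m := maxw p in
    let i := index m p in
    let a := take i p in
    let b := drop i.+1 p in
    flatten [seq [seq g ++ m :: d | g <- unS_rec n' (take j a),
                                     d <- unS_rec n' (drop j a ++ b)]
            | j <- iota 0 i.+1]
  end.

Definition unS (p : seq int) : seq (seq int) := unS_rec (size p) p.

Example ex1 : stack_sort [:: 2; 3; 1]%R = [:: 2; 1; 3]%R. Proof. by []. Qed.
Example ex2 : unS [:: 1; 2]%R = [:: [:: 2; 1]; [:: 1; 2]]%R. Proof. by []. Qed.

From mathcomp Require Import all_boot all_order all_algebra.
Import Order.TTheory GRing.Theory Num.Theory.
Local Open Scope ring_scope.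

(* If [m] is the largest letter of [q = g m d], then every letter of [g] is
   popped when [m] arrives and [m] stays at the bottom of the stack until the
   end, so [S(q) = S(g) S(d) m].  Hence [p = S(q)] ends with [m], its prefix
   splits as [S(g) S(d)] at [j = |g|], and induction on [g] and [d] puts
   [q] into the [j]-th summand of the definition of [unS(p)]. *)

Lemma spush_perm x stk :
  perm_eq ((spush x stk).1 ++ (spush x stk).2) (x :: stk).
Proof.
elim: stk => [|y s IHs] //=; case: ifP => _ //.
case E: (spush x s) => [o s'] /=; rewrite E /= in IHs.
rewrite -(perm_cons y) in IHs; apply: (perm_trans IHs).
by rewrite -[y :: x :: s]/([:: y] ++ [:: x] ++ s) perm_catCA.
Qed.

Lemma all_spush {P : pred int} {x stk} :
  all P stk -> P x -> all P (spush x stk).2.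
Proof.
elim: stk => [|y s IHs] /=; first by move=> _ ->.
move=> /andP[Py Ps] Px; case: ifP => _ /=; last by rewrite Px Py Ps.
by case E: (spush x s) => [o s'] /=; move: (IHs Ps Px); rewrite E.
Qed.

Lemma spush_max m stk : all (< m) stk -> spush m stk = (stk, [:: m]).
Proof. by elim: stk => [|y s IHs] //= /andP[-> /IHs ->]. Qed.

Lemma spush_rcons m x stk : all (< m) stk -> x < m ->
  spush x (rcons stk m) = ((spush x stk).1, rcons (spush x stk).2 m).
Proof.
elim: stk => [|y s IHs] /=; first by move=> _ xm; rewrite ltNge (ltW xm).
move=> /andP[_ Hs] xm; case: ifP => _ //.
by rewrite IHs //; case: (spush x s).
Qed.

Lemma perm_stack_sort_aux w stk : perm_eq (stack_sort_aux w stk) (w ++ stk).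
Proof.
elim: w stk => [|x w IHw] stk //=.
have := spush_perm x stk; case: (spush x stk) => [o s'] /= Hpush.
apply: (perm_trans (perm_cat (perm_refl o) (IHw s'))).
rewrite perm_catCA; apply: (perm_trans (perm_cat (perm_refl w) Hpush)).
by rewrite (perm_catCA w [:: x] stk).
Qed.

Lemma perm_stack_sort w : perm_eq (stack_sort w) w.
Proof. by have := perm_stack_sort_aux w [::]; rewrite cats0. Qed.

Lemma stack_sort_aux_rcons m w stk : all (< m) stk -> all (< m) w ->
  stack_sort_aux w (rcons stk m) = rcons (stack_sort_aux w stk) m.
Proof.
elim: w stk => [|x w IHw] stk //= Hs /andP[xm Hw].
rewrite spush_rcons //; have := all_spush Hs xm.
by case: (spush x stk) => [o s'] /= Hs'; rewrite IHw // rcons_cat.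
Qed.

Lemma stack_sort_aux_cat_max m g d stk :
  all (< m) stk -> all (< m) g -> all (< m) d ->
  stack_sort_aux (g ++ m :: d) stk = stack_sort_aux g stk ++ rcons (stack_sort d) m.
Proof.
elim: g stk => [|x g IHg] stk /= Hs.
  by move=> _ Hd; rewrite spush_max // -[[:: m]]/(rcons [::] m) stack_sort_aux_rcons.
move=> /andP[xm Hg] Hd; have := all_spush Hs xm.
by case: (spush x stk) => [o s'] /= Hs'; rewrite IHg // catA.
Qed.

Lemma stack_sort_cat_max m g d : all (< m) g -> all (< m) d ->
  stack_sort (g ++ m :: d) = stack_sort g ++ rcons (stack_sort d) m.
Proof. exact: stack_sort_aux_cat_max. Qed.

Lemma maxw_ge p x : x \in p -> x <= maxw p.
Proof.
rewrite /maxw; move: (head 0 p) => z; elim: p => [|y s IHs] //=.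
by rewrite inE le_max => /orP[/eqP->|/IHs->]; rewrite ?lexx ?orbT.
Qed.

Lemma maxw_in p : p != [::] -> maxw p \in p.
Proof.
case: p => [|a p] // _; rewrite /maxw /=.
suff: foldr Num.max a (a :: p) \in a :: a :: p by rewrite !inE orbA orbb.
elim: (a :: p) => [|y s IHs] /=; first exact: mem_head.
rewrite maxEle; case: ifP => _; last by rewrite !inE eqxx orbT.
by move: IHs; rewrite !inE => /orP[->|->]; rewrite ?orbT.
Qed.

Lemma maxw_eq m p : m \in p -> all (<= m) p -> maxw p = m.
Proof.
move=> mp /allP le_m; apply/eqP; rewrite eq_le maxw_ge // andbT.
by apply: le_m; apply: maxw_in; apply: contraTneq mp => ->.
Qed.

Lemma unS_recS n p : p != [::] ->
  unS_rec n.+1 p =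
  let m := maxw p in let i := index m p in
  let a := take i p in let b := drop i.+1 p in
  flatten [seq [seq g ++ m :: d | g <- unS_rec n (take j a),
                                   d <- unS_rec n (drop j a ++ b)]
          | j <- iota 0 i.+1].
Proof. by case: p. Qed.

Lemma unS_rec_cat_max n a1 a2 m g d : all (< m) (a1 ++ a2) ->
  g \in unS_rec n a1 -> d \in unS_rec n a2 ->
  g ++ m :: d \in unS_rec n.+1 (a1 ++ a2 ++ [:: m]).
Proof.
move=> Ha g_un d_un; set p := a1 ++ _.
have p_nil : p != [::] by rewrite /p catA cats1; case: (a1 ++ a2).
rewrite unS_recS //; cbv zeta.
have m_notin : m \notin a1 ++ a2 by apply/negP => /(allP Ha) /=; rewrite ltxx.
have -> : maxw p = m.
  apply: maxw_eq; first by rewrite /p !mem_cat mem_head !orbT.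
  by rewrite /p catA cats1 all_rcons /= lexx; apply: sub_all Ha => y /ltW.
have Ei : index m p = size (a1 ++ a2).
  by rewrite /p catA index_cat (negbTE m_notin) /= eqxx addn0.
have Eb : drop (size (a1 ++ a2)).+1 ((a1 ++ a2) ++ [:: m]) = [::].
  by rewrite drop_oversize // cats1 size_rcons.
rewrite Ei /p catA take_size_cat // Eb.
apply/flatten_mapP; exists (size a1); first by rewrite mem_iota ltnS size_cat leq_addr.
rewrite take_size_cat // drop_size_cat // cats0.
exact: (allpairs_f (fun g d => g ++ m :: d)).
Qed.

Lemma stack_sort_preimage_in_unS_rec n p q : (size p <= n)%N ->
  uniq p -> perm_eq q p -> stack_sort q = p -> q \in unS_rec n p.
Proof.
elim: n p q => [|n IHn] p q.
  by rewrite leqn0 => /nilP -> _ /perm_nilP ->; rewrite inE.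
have [->|p_nil] := eqVneq p [::]; first by case: n {IHn} => [|n] _ _ /perm_nilP ->.
move=> size_p uniq_p pqp sort_q; set m := maxw p.
have mq : m \in q by rewrite (perm_mem pqp) maxw_in.
move: pqp sort_q; case/splitPr: mq => g d pqp sort_q.
have uniq_q : uniq (g ++ m :: d) by rewrite (perm_uniq pqp).
have lt_m : all (< m) (g ++ d).
  apply/allP => x xgd /=; rewrite lt_neqAle maxw_ge ?andbT; last first.
    by rewrite -(perm_mem pqp) mem_cat inE orbCA -mem_cat xgd orbT.
  apply: contraTneq xgd => ->; move: uniq_q.
  by rewrite cat_uniq mem_cat /= => /and4P[_ /norP[/negPf-> _] /negPf-> _].
move: (lt_m); rewrite all_cat => /andP[lt_g lt_d].
have Ep : p = stack_sort g ++ stack_sort d ++ [:: m].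
  by rewrite -sort_q stack_sort_cat_max // -cats1.
have /andP[uniq_g uniq_d] : uniq (stack_sort g) && uniq (stack_sort d).
  by move: uniq_p; rewrite Ep !cat_uniq => /and4P[-> _ -> _].
rewrite Ep; apply: unS_rec_cat_max.
- by rewrite (perm_all _ (perm_cat (perm_stack_sort g) (perm_stack_sort d))).
- apply: IHn => //; last by rewrite perm_sym perm_stack_sort.
  by rewrite -ltnS (leq_trans _ size_p) // Ep !size_cat /= addn1 addnS ltnS leq_addr.
- apply: IHn => //; last by rewrite perm_sym perm_stack_sort.
  by rewrite -ltnS (leq_trans _ size_p) // Ep !size_cat /= addn1 addnS ltnS leq_addl.
Qed.

Theorem proposition4p1 (p q : seq int) :
  uniq p -> perm_eq q p -> stack_sort q = p -> q \in unS p.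
Proof. exact: stack_sort_preimage_in_unS_rec. Qed.
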